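(* For $m\ge1$ define $\gamma_m\in S_{3m+2}$ by $$\gamma_m=3m+2,\ P_1,\ P_2,\ \dots,\ P_m,\ 2m+2,$$ where $P_i=2i,\ 3m+2-i,\ 2i-1$ for $1\le i\le m-1$ and $P_m=2m,\ 2m+1,\ 2m-1$ (so $\gamma_1=52314$, $\gamma_2=82714536$). Then: (1) $\gamma_i$ is a pattern of $\gamma_{i+1}$ for every $i\ge1$; (2) $\gamma_i$ is qlg-$2$-sortable if and only if $i$ is even.
   Context: The $\mathfrak{D}^2\mathfrak{I}$ machine consists of two decreasing stacks $D_1,D_2$ followed in series by an increasing stack $I$. Elements of $D_1,D_2$ must be in decreasing order from top to bottom (top largest); elements of $I$ in increasing order from top to bottom (top smallest). Operations: $d_0$ pushes the next input element into $D_1$; $d_1$ moves the top of $D_1$ to $D_2$; $d_2$ moves the top of $D_2$ to $I$; $d_3$ pops the top of $I$ and appends it to the output. An operation is legal if it respects the stack restrictions; $d_3$ is legal if the popped element is the smallest among the elements not yet output, and also if no other operation is legal. The quasi left-greedy procedure performs at each step the first legal operation in the priority order $d_3\rhd d_1\rhd d_0\rhd d_2$. A permutation is qlg-$2$-sortable if this procedure outputs its elements in increasing order. *)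

From mathcomp Require Import all_boot.
Set Implicit Arguments. Unset Strict Implicit. Unset Printing Implicit Defensive.

(* A permutation of S_n is represented by its one-line notation, a seq nat
   which is a rearrangement of 1..n. *)

Definition is_pattern (p s : seq nat) : Prop :=
  exists2 t : seq nat, subseq t s &
    size t = size p /\
    forall i j, i < size p -> j < size p ->
      (nth 0 p i < nth 0 p j) = (nth 0 t i < nth 0 t j).

(* Stacks are seqs with the head being the top of the stack. *)
Record mstate := MState {
  inp : seq nat;
  st1 : seq nat;   (* D1, decreasing top to bottom (top largest) *)
  st2 : seq nat;   (* D2, decreasing top to bottom (top largest) *)
  sti : seq nat;   (* I, increasing top to bottom (top smallest) *)
  outp : seq nat
}.

Definition d0_legal (s : mstate) : bool :=
  if inp s is x :: _ then (if st1 s is y :: _ then y < x else true) else false.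
Definition d1_legal (s : mstate) : bool :=
  if st1 s is x :: _ then (if st2 s is y :: _ then y < x else true) else false.
Definition d2_legal (s : mstate) : bool :=
  if st2 s is x :: _ then (if sti s is y :: _ then x < y else true) else false.
Definition d3_legal (s : mstate) : bool :=
  if sti s is x :: _ then
    all (fun y => x <= y) (inp s ++ st1 s ++ st2 s ++ sti s)
    || ~~ [|| d0_legal s, d1_legal s | d2_legal s]
  else false.

Definition do_d0 (s : mstate) : mstate :=
  if inp s is x :: r then MState r (x :: st1 s) (st2 s) (sti s) (outp s) else s.
Definition do_d1 (s : mstate) : mstate :=
  if st1 s is x :: r then MState (inp s) r (x :: st2 s) (sti s) (outp s) else s.
Definition do_d2 (s : mstate) : mstate :=
  if st2 s is x :: r then MState (inp s) (st1 s) r (x :: sti s) (outp s) else s.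
Definition do_d3 (s : mstate) : mstate :=
  if sti s is x :: r then MState (inp s) (st1 s) (st2 s) r (rcons (outp s) x) else s.

Definition qlg_step (s : mstate) : option mstate :=
  if d3_legal s then Some (do_d3 s)
  else if d1_legal s then Some (do_d1 s)
  else if d0_legal s then Some (do_d0 s)
  else if d2_legal s then Some (do_d2 s)
  else None.

Fixpoint qlg_run (fuel : nat) (s : mstate) : mstate :=
  if fuel is f.+1 then
    (if qlg_step s is Some s' then qlg_run f s' else s)
  else s.

(* Each element undergoes at most 4 operations (d0,d1,d2,d3), so the
   procedure halts after at most 4n steps; 4n fuel suffices. *)
Definition qlg_2_sortable (p : seq nat) : bool :=
  outp (qlg_run (4 * size p) (MState p [::] [::] [::] [::])) == sort leq p.

Definition gammaP (m i : nat) : seq nat :=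
  if i < m then [:: i.*2; 3 * m + 2 - i; i.*2.-1]
  else [:: m.*2; m.*2.+1; m.*2.-1].

Definition gamma (m : nat) : seq nat :=
  (3 * m + 2) :: flatten [seq gammaP m i | i <- iota 1 m] ++ [:: m.*2 + 2].

From mathcomp Require Import all_boot zify.
Set Implicit Arguments. Unset Strict Implicit. Unset Printing Implicit Defensive.

(* As long as 1 has not been output, d3 is legal only when no other operation
   is, so on gamma m the procedure applies the first legal operation among
   d1, d0, d2 and its run can be traced block by block: after P_k the odd
   numbers below 2k lie on D1, the even ones on D2, and the large values
   3m+2-k, ..., 3m+2 in I, except that for even k the value 3m+2-k is still
   on top of D2. For even m the last block and 2m+2 then drain into I, which
   is output as 1, 2, ..., 3m+2; for odd m the machine gets stuck and must
   output 2m+1 before 1. For the pattern part, deleting the block P_m from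
   gamma (m+1) leaves a sequence order-isomorphic to gamma m. *)

Definition start (p : seq nat) : mstate := MState p [::] [::] [::] [::].

Definition contents (s : mstate) : seq nat :=
  inp s ++ st1 s ++ st2 s ++ sti s ++ outp s.

Lemma qlg_run_step f s s' : qlg_step s = Some s' -> qlg_run f.+1 s = qlg_run f s'.
Proof. by move=> /= ->. Qed.

Lemma qlg_runD a b s : qlg_run (a + b) s = qlg_run b (qlg_run a s).
Proof.
elim: a s => [//|a IHa] s /=.
case E: (qlg_step s) => [s'|]; first exact: IHa.
by case: b {IHa} => //= b; rewrite E.
Qed.

Lemma do_op_inv s :
  all (fun t => perm_eq (contents t) (contents s) && prefix (outp s) (outp t))
    [:: do_d0 s; do_d1 s; do_d2 s; do_d3 s].
Proof.
case: s => i s1 s2 si o; rewrite /= andbT; apply/and4P.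
split; [case: i => [|a i] | case: s1 => [|a s1] | case: s2 => [|a s2] | case: si => [|a si]];
  rewrite /= ?perm_refl ?prefix_refl ?prefix_rcons ?andbT //;
  apply/permP => p; rewrite /contents /= -?cats1 !count_cat /= !count_cat; lia.
Qed.

Lemma qlg_step_inv s s' : qlg_step s = Some s' ->
  perm_eq (contents s') (contents s) && prefix (outp s) (outp s').
Proof.
have := do_op_inv s; rewrite /= andbT => /and4P[? ? ? ?].
by rewrite /qlg_step; do 4 (case: ifP => _; first by case=> <-).
Qed.

Lemma qlg_run_inv f s :
  perm_eq (contents (qlg_run f s)) (contents s) && prefix (outp s) (outp (qlg_run f s)).
Proof.
elim: f s => [|f IHf] s /=; first by rewrite perm_refl prefix_refl.
case E: (qlg_step s) => [s'|]; last by rewrite perm_refl prefix_refl.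
have /andP[perm_s' pre_s'] := qlg_step_inv E.
have /andP[perm_f pre_f] := IHf s'.
by rewrite (perm_trans perm_f perm_s') (prefix_trans pre_s' pre_f).
Qed.

Lemma qlg_run_flush si o :
  qlg_run (size si) (MState [::] [::] [::] si o) = MState [::] [::] [::] [::] (o ++ si).
Proof.
elim: si o => [|x si IHsi] o /=; first by rewrite cats0.
by rewrite /qlg_step /d3_legal /= orbT IHsi cat_rcons.
Qed.

Lemma qlg_2_sortable_sorted p o :
  qlg_run (4 * size p) (start p) = MState [::] [::] [::] [::] o -> sorted leq o ->
  qlg_2_sortable p.
Proof.
move=> run_p sorted_o; have /andP[perm_o _] := qlg_run_inv (4 * size p) (start p).
rewrite /qlg_2_sortable run_p /=; apply/eqP/(sorted_eq leq_trans anti_leq sorted_o).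
  exact: sort_sorted leq_total p.
by rewrite perm_sym perm_sort; move: perm_o; rewrite run_p /contents /= !cats0 perm_sym.
Qed.

Lemma qlg_2_sortable_prefix p x y :
  prefix [:: x] (outp (qlg_run (4 * size p) (start p))) -> y \in p -> y < x ->
  ~~ qlg_2_sortable p.
Proof.
move=> /prefixP[o out_p] y_in y_lt_x; rewrite /qlg_2_sortable out_p /=.
apply/negP => /eqP sort_p.
have := sort_sorted leq_total p; rewrite -sort_p /= => /(order_path_min leq_trans)/allP x_min.
have := mem_sort leq p y; rewrite y_in -sort_p inE => /orP[/eqP|/x_min]; lia.
Qed.

Definition one_pending (s : mstate) : bool :=
  (1 \in inp s ++ st1 s ++ st2 s) && (if sti s is x :: _ then 1 < x else true).

Lemma d3_legalF s : one_pending s -> [|| d0_legal s, d1_legal s | d2_legal s] ->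
  d3_legal s = false.
Proof.
rewrite /one_pending /d3_legal; case: (sti s) => [//|x r] /andP[one_in x_gt1] ->.
rewrite orbF; apply/negP => /allP/(_ 1); rewrite catA catA mem_cat -catA one_in.
by move=> /(_ isT); lia.
Qed.

Section ForcedSteps.
Variables (f : nat) (i s1 s2 si o : seq nat) (x : nat).

Lemma qlg_run_d1 (s := MState i (x :: s1) s2 si o) :
  one_pending s -> d1_legal s -> qlg_run f.+1 s = qlg_run f (MState i s1 (x :: s2) si o).
Proof.
move=> pend d1_s; apply: qlg_run_step.
by rewrite /qlg_step d3_legalF ?d1_s ?orbT.
Qed.

Lemma qlg_run_d0 (s := MState (x :: i) s1 s2 si o) :
  one_pending s -> ~~ d1_legal s -> d0_legal s ->
  qlg_run f.+1 s = qlg_run f (MState i (x :: s1) s2 si o).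
Proof.
move=> pend /negbTE d1_s d0_s; apply: qlg_run_step.
by rewrite /qlg_step d3_legalF ?d1_s ?d0_s.
Qed.

Lemma qlg_run_d2 (s := MState i s1 (x :: s2) si o) :
  one_pending s -> ~~ d1_legal s -> ~~ d0_legal s -> d2_legal s ->
  qlg_run f.+1 s = qlg_run f (MState i s1 s2 (x :: si) o).
Proof.
move=> pend /negbTE d1_s /negbTE d0_s d2_s; apply: qlg_run_step.
by rewrite /qlg_step d3_legalF ?d1_s ?d0_s ?d2_s ?orbT.
Qed.

Lemma qlg_run_stuck (s := MState i s1 s2 (x :: si) o) :
  ~~ d0_legal s -> ~~ d1_legal s -> ~~ d2_legal s ->
  qlg_run f.+1 s = qlg_run f (MState i s1 s2 si (rcons o x)).
Proof.
move=> /negbTE d0_s /negbTE d1_s /negbTE d2_s; apply: qlg_run_step.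
by rewrite /qlg_step /d3_legal d0_s d1_s d2_s /= orbT.
Qed.

End ForcedSteps.

Definition gamma_suffix (m k : nat) : seq nat :=
  flatten [seq gammaP m i | i <- iota k (m - k).+1] ++ [:: m.*2 + 2].
Arguments gamma_suffix : simpl never.

Lemma gammaP_lt m k : k < m -> gammaP m k = [:: k.*2; 3 * m + 2 - k; k.*2.-1].
Proof. by move=> lt_km; rewrite /gammaP lt_km. Qed.

Lemma gamma_suffix_cons m k : k < m -> gamma_suffix m k = gammaP m k ++ gamma_suffix m k.+1.
Proof.
by move=> lt_km; rewrite /gamma_suffix (_ : m - k = (m - k.+1).+1) 1?[in RHS]catA //; lia.
Qed.

Lemma gamma_suffix_last m : gamma_suffix m m = [:: m.*2; m.*2.+1; m.*2.-1; m.*2 + 2].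
Proof. by rewrite /gamma_suffix subnn /= /gammaP ltnn. Qed.

Lemma gamma_suffix_head m k : k <= m -> exists r, gamma_suffix m k = k.*2 :: r.
Proof.
rewrite leq_eqVlt => /orP[/eqP->|lt_km]; first by rewrite gamma_suffix_last; eexists.
by rewrite gamma_suffix_cons // gammaP_lt //; eexists.
Qed.

Lemma gammaE m : 1 <= m -> gamma m = (3 * m + 2) :: gamma_suffix m 1.
Proof. by move=> m_gt0; rewrite /gamma /gamma_suffix (_ : (m - 1).+1 = m) //; lia. Qed.

Lemma size_gamma m : size (gamma m) = 3 * m + 2.
Proof.
have size_blocks s : size (flatten [seq gammaP m i | i <- s]) = 3 * size s.
  by elim: s => [//|k s IHs]; rewrite /= size_cat IHs /gammaP; case: ifP => _ /=; lia.
by rewrite /= size_cat size_blocks size_iota /=; lia.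
Qed.

Lemma one_in_gamma m : 1 <= m -> 1 \in gamma m.
Proof.
move=> m_gt0; rewrite inE mem_cat; apply/orP; right; apply/orP; left.
apply/flattenP; exists (gammaP m 1); first by apply: map_f; rewrite mem_iota; lia.
by rewrite /gammaP; case: ifP; rewrite !inE; lia.
Qed.

Fixpoint odds k := if k is k'.+1 then k'.*2.+1 :: odds k' else [::].
Fixpoint evens k := if k is k'.+1 then k'.*2.+2 :: evens k' else [::].

Lemma mem1_odds k : (1 \in odds k) = (0 < k).
Proof. by elim: k => //= k IHk; rewrite inE IHk; case: k {IHk}. Qed.

Lemma mem1_evens k : (1 \in evens k) = false.
Proof. by elim: k => //= k IHk; rewrite inE IHk. Qed.

Lemma iota_cons a b : 0 < b -> iota a b = a :: iota a.+1 b.-1.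
Proof. by case: b. Qed.

Ltac legality := rewrite /one_pending /d0_legal /d1_legal /d2_legal /=;
  rewrite ?(mem_cat, in_cons, mem1_odds, mem1_evens); first [done | lia].
Ltac forced_step := first
  [ rewrite qlg_run_d1; [|legality..]
  | rewrite qlg_run_d0; [|legality..]
  | rewrite qlg_run_d2; [|legality..] ].
Ltac seq_eq := first
  [ reflexivity | refine (f_equal2 cons _ _); [lia | seq_eq]
  | refine (f_equal2 iota _ _); lia
  | rewrite [RHS]iota_cons; [seq_eq | lia] | rewrite [LHS]iota_cons; [seq_eq | lia] | lia ].
Ltac state_eq := rewrite /=; congr MState; seq_eq.

(* Configurations after reading 3m+2, P_1, ..., P_k: [settled] for odd k,
   [blocked] for even k; [draining] follows the end of the input for even m. *)
Definition settled m k :=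
  MState (gamma_suffix m k.+1) (odds k) (evens k) (iota (3 * m + 2 - k) k.+1) [::].
Definition blocked m k :=
  MState (gamma_suffix m k.+1) (odds k) ((3 * m + 2 - k) :: evens k)
    (iota (3 * m + 3 - k) k) [::].
Definition draining m j :=
  MState [::] (odds j) (evens j.-1) (iota j.*2 (3 * m + 3 - j.*2)) [::].

Lemma qlg_run_gamma_settled m : 2 <= m -> qlg_run 9 (start (gamma m)) = settled m 1.
Proof.
move=> m_ge2; have [r suffix2] := gamma_suffix_head m_ge2.
rewrite /start /settled gammaE 1?gamma_suffix_cons ?gammaP_lt ?suffix2; try lia.
by do 9 forced_step; state_eq.
Qed.

Lemma settled_blocked m k : k.+2 < m -> qlg_run 5 (settled m k.+1) = blocked m k.+2.
Proof.
move=> lt_km; have [r suffix] := gamma_suffix_head lt_km.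
rewrite /settled /blocked gamma_suffix_cons // gammaP_lt // suffix.
by do 5 forced_step; state_eq.
Qed.

Lemma blocked_settled m k : k.+2 < m -> qlg_run 7 (blocked m k.+1) = settled m k.+2.
Proof.
move=> lt_km; have [r suffix] := gamma_suffix_head lt_km.
rewrite /settled /blocked gamma_suffix_cons // gammaP_lt // suffix.
by do 7 forced_step; state_eq.
Qed.

Lemma settled_iter m j : j.*2.+1 < m -> qlg_run (12 * j) (settled m 1) = settled m j.*2.+1.
Proof.
elim: j => [//|j IHj] lt_jm.
rewrite (_ : 12 * j.+1 = 12 * j + 5 + 7); last lia.
rewrite 2!qlg_runD IHj; last lia.
rewrite settled_blocked ?blocked_settled -?doubleS //; lia.
Qed.

Lemma settled_draining n : qlg_run 10 (settled n.+2 n.+1) = draining n.+2 n.+2.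
Proof. by rewrite /settled /draining gamma_suffix_last; do 10 forced_step; state_eq. Qed.

Lemma draining_step m j : j.+2 <= m -> qlg_run 3 (draining m j.+2) = draining m j.+1.
Proof.
by move=> le_jm; rewrite /draining [in LHS]iota_cons; [do 3 forced_step; state_eq | lia].
Qed.

Lemma draining_iter m j : j.+1 <= m -> qlg_run (3 * j) (draining m j.+1) = draining m 1.
Proof.
elim: j => [//|j IHj] le_jm.
by rewrite (_ : 3 * j.+1 = 3 + 3 * j) 1?qlg_runD 1?draining_step 1?IHj //; lia.
Qed.

Lemma draining_last m : 1 <= m ->
  qlg_run 2 (draining m 1) = MState [::] [::] [::] (iota 1 (3 * m + 2)) [::].
Proof.
move=> m_gt0; rewrite /draining (_ : 3 * m + 3 - 1.*2 = (3 * m).+1) 1?(_ : 3 * m + 2 = (3 * m).+2);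
  try lia.
by do 2 forced_step; state_eq.
Qed.

Lemma blocked_stuck n : outp (qlg_run 10 (blocked n.+3 n.+2)) = [:: n.+3.*2.+1].
Proof.
rewrite /blocked gamma_suffix_last; do 9 forced_step.
by rewrite qlg_run_stuck //; rewrite /d0_legal /d1_legal /d2_legal /=; lia.
Qed.

Lemma is_pattern_mono (f : nat -> nat) p s :
  {mono f : x y / x < y} -> subseq (map f p) s -> is_pattern p s.
Proof.
move=> f_mono sub_ps; exists (map f p) => //; rewrite size_map; split=> // i j ip jp.
by rewrite !(nth_map 0) ?f_mono.
Qed.

(* The relabelling that maps gamma m onto gamma (m+1) with the block P_m
   deleted. *)
Definition gamma_embed m v :=
  if v < m.*2.-1 then v else if v < m.*2 + 3 then v + 2 else v + 3.

Lemma gamma_embed_mono m : {mono gamma_embed m : x y / x < y}.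
Proof. by move=> x y; rewrite /gamma_embed; repeat case: ifP => ?; lia. Qed.

Lemma map_gamma_embed n : map (gamma_embed n.+1) (gamma n.+1) =
  (3 * n.+2 + 2) :: flatten [seq gammaP n.+2 i | i <- iota 1 n] ++
    [:: n.*2 + 4; n.*2 + 5; n.*2 + 3; n.*2 + 6].
Proof.
rewrite /gamma (_ : iota 1 n.+1 = iota 1 n ++ [:: n.+1]); last first.
  by rewrite -{1}[n.+1]addn1 iotaD add1n.
rewrite map_cat flatten_cat /= cats0 -catA map_cat map_flatten -map_comp.
have -> : gamma_embed n.+1 (3 * n.+1 + 2) = 3 * n.+2 + 2.
  by rewrite /gamma_embed; repeat case: ifP => ?; lia.
congr (_ :: _ ++ _).
  congr flatten; apply/eq_in_map => i; rewrite mem_iota => i_range /=.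
  rewrite !gammaP_lt /= /gamma_embed; try lia.
  by congr [:: _; _; _]; repeat case: ifP => ?; lia.
by rewrite /gammaP ltnn /gamma_embed /=; congr [:: _; _; _; _]; repeat case: ifP => ?; lia.
Qed.

Lemma gamma_split n : gamma n.+2 =
  (3 * n.+2 + 2) :: flatten [seq gammaP n.+2 i | i <- iota 1 n] ++
    (gammaP n.+2 n.+1 ++ [:: n.*2 + 4; n.*2 + 5; n.*2 + 3; n.*2 + 6]).
Proof.
rewrite /gamma (_ : iota 1 n.+2 = iota 1 n ++ [:: n.+1; n.+2]); last first.
  by rewrite -{1}[n.+2]addn2 iotaD add1n.
rewrite map_cat flatten_cat -catA /= cats0 -catA /gammaP ltnn.
by congr (_ :: _ ++ _ ++ _); congr [:: _; _; _; _]; lia.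
Qed.

Lemma gamma_pattern_succ m : 1 <= m -> is_pattern (gamma m) (gamma m.+1).
Proof.
case: m => // n _; apply: is_pattern_mono (gamma_embed_mono n.+1) _.
rewrite map_gamma_embed gamma_split /= eqxx.
exact: cat_subseq (subseq_refl _) (suffix_subseq _ _).
Qed.

Lemma gamma_even_sortable j : qlg_2_sortable (gamma j.*2.+2).
Proof.
set m := j.*2.+2; set out := iota 1 (3 * m + 2).
apply: (@qlg_2_sortable_sorted _ out); last exact: iota_sorted.
rewrite size_gamma (_ : 4 * (3 * m + 2) =
  9 + (12 * j + (10 + (3 * j.*2.+1 + (2 + size out))))); last first.
  by rewrite size_iota /m; lia.
rewrite qlg_runD qlg_run_gamma_settled; last by rewrite /m.
rewrite (qlg_runD (12 * j)) settled_iter; last by rewrite /m; lia.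
rewrite qlg_runD settled_draining (qlg_runD (3 * _)) draining_iter; last by rewrite /m; lia.
by rewrite qlg_runD draining_last // qlg_run_flush.
Qed.

Lemma gamma_odd_unsortable j : ~~ qlg_2_sortable (gamma j.*2.+3).
Proof.
set m := j.*2.+3.
apply: (@qlg_2_sortable_prefix _ m.*2.+1 1); last first.
- by rewrite /m; lia.
- exact: one_in_gamma.
rewrite size_gamma (_ : 4 * (3 * m + 2) = 9 + (12 * j + (5 + (10 + (12 * j + 20))))); last first.
  by rewrite /m; lia.
rewrite qlg_runD qlg_run_gamma_settled; last by rewrite /m.
rewrite (qlg_runD (12 * j)) settled_iter; last by rewrite /m; lia.
rewrite qlg_runD settled_blocked; last by rewrite /m; lia.
rewrite qlg_runD -(blocked_stuck j.*2).
by have /andP[_ ->] := qlg_run_inv (12 * j + 20) (qlg_run 10 (blocked j.*2.+3 j.*2.+2)).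
Qed.

Theorem mainTheorem14 :
  (forall i, 1 <= i -> is_pattern (gamma i) (gamma i.+1)) /\
  (forall i, 1 <= i -> qlg_2_sortable (gamma i) = ~~ odd i).
Proof.
split=> [|i]; first exact: gamma_pattern_succ.
rewrite -{1 2}(odd_double_half i); case: (odd i) (i./2) => [] [|j] i_gt0.
- by vm_compute.
- by rewrite add1n doubleS (negbTE (gamma_odd_unsortable j)).
- by [].
- by rewrite add0n doubleS gamma_even_sortable.
Qed.
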